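(* Let $n$ be a positive even integer and let $a_1,\dots,a_n$ be positive integers. Let $1\le m\le n$ and write $m=2l+r_0$ with $r_0\in\{0,1\}$. For integers $i$ with $r_0\le i\le \frac{n-m+r_0}{2}$ define $$\Gamma_n(m,i)=\sum_{j=0}^{\min\{m-1,\,2i-r_0\}}(-1)^j\,\gamma_n(m-1-j)\,\gamma_{2i-r_0}(j).$$ Then $$\gamma_n(m)=\sum_{i=r_0}^{\frac{n-m+r_0}{2}}a_{2i+1-r_0}\,\Gamma_n(m,i).$$
   Context: For $k\ge1$ and $1\le l\le k$, $I_{k,l}$ is the set of strictly increasing sequences $(t_1,\dots,t_l)$ in $\{1,\dots,k\}$ with $t_i\equiv k+i-l\pmod2$ for all $i$. For $0\le k\le n$ and $1\le l\le k$ define $\gamma_k(l)=\sum_{(t_1,\dots,t_l)\in I_{k,l}}a_{t_1}\cdots a_{t_l}$. Set $\gamma_k(0)=1$ for all $k\ge0$, including $k=0$. *)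

From HB Require Import structures.
From mathcomp Require Import all_boot all_order all_algebra.
Set Implicit Arguments. Unset Strict Implicit. Unset Printing Implicit Defensive.
Import Order.TTheory GRing.Theory Num.Theory.

(* A sequence is a function 'I_l -> 'I_(k.+1);
   position i : 'I_l stands for the index i+1.  The congruence
   t_i = k + i - l (mod 2) is written t_i + l = k + i (mod 2) to avoid
   truncated subtraction. *)
Definition Iset (k l : nat) : {set {ffun 'I_l -> 'I_k.+1}} :=
  [set t : {ffun 'I_l -> 'I_k.+1} |
     [forall i : 'I_l, (0 < t i)%N && (t i + l == k + i.+1 %[mod 2])] &&
     [forall i : 'I_l, forall j : 'I_l, (i < j)%N ==> (t i < t j)%N]].

(* gamma_k(l) = sum over I_{k,l} of a_{t_1} ... a_{t_l}.  For l = 0 the set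
   contains exactly the empty sequence, so gamma_k(0) = 1 (also for k = 0). *)
Definition gamma (a : nat -> int) (k l : nat) : int :=
  (\sum_(t in Iset k l) \prod_(i < l) a (t i))%R.

Definition Gamma (a : nat -> int) (n m r0 i : nat) : int :=
  (\sum_(0 <= j < (minn (m - 1) (2 * i - r0)).+1)
     (-1) ^+ j * gamma a n (m - 1 - j) * gamma a (2 * i - r0) j)%R.

(* Splitting the sequences of I_{k+1,l+1} according to whether their last entry
   is k+1 gives gamma_{k+1}(l+1) = a_{k+1} gamma_k(l) + gamma_{k-1}(l+1), so the
   polynomials E_k(X) = sum_j gamma_k(j) X^j obey the continuant recurrence
   E_{k+1} = E_{k-1} + a_{k+1} X E_k.  Consequently
   E_{k+1}(X) E_k(-X) + E_{k+1}(-X) E_k(X) = 2, and Gamma_n(m,i) is the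
   coefficient of X^{m-1} in E_n(X) E_{2i-r0}(-X).  Running the recurrence in
   the second factor telescopes gamma_n(m), the coefficient of X^m in
   E_n(X) E_0(-X), into the stated sum plus the coefficient of X^m in
   E_n(X) E_{n-m+1}(-X).  That remainder vanishes: starting from K = n, where
   E_n(X) E_n(-X) is even, and K = n-1, where E_n(X) E_{n-1}(-X) is 1 plus an
   odd polynomial, the recurrence shows for even n that the coefficient of X^p
   in E_n(X) E_K(-X) is 0 whenever n - p < K and K + p is odd. *)

From HB Require Import structures.
From mathcomp Require Import all_boot all_order all_algebra.
From mathcomp Require Import zify ring lra.
Import Order.TTheory GRing.Theory Num.Theory.
Set Implicit Arguments. Unset Strict Implicit. Unset Printing Implicit Defensive.

Lemma IsetP k l (t : {ffun 'I_l -> 'I_k.+1}) :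
  reflect ((forall i : 'I_l, 0 < t i /\ (t i + l) %% 2 = (k + i.+1) %% 2) /\
           (forall i j : 'I_l, i < j -> t i < t j)) (t \in Iset k l).
Proof.
rewrite inE; apply: (iffP andP) => [[/forallP Ht /forallP Hinc]|[Ht Hinc]]; split.
- by move=> i; case/andP: (Ht i) => -> /eqP.
- by move=> i j; move/forallP: (Hinc i) => /(_ j) /implyP.
- by apply/forallP => i; case: (Ht i) => -> ->; rewrite eqxx.
- by apply/forallP => i; apply/forallP => j; apply/implyP; apply: Hinc.
Qed.

Lemma ord_maxVlift l (i : 'I_l.+1) : i = ord_max \/ exists j, i = lift ord_max j.
Proof. by case: (unliftP ord_max i) => [j ->|->]; [right; exists j|left]. Qed.

Lemma Iset_last_lt k l (t : {ffun 'I_l.+1 -> 'I_k.+1}) (i : 'I_l.+1) :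
  t \in Iset k l.+1 -> i != ord_max -> t i < t ord_max.
Proof.
move=> /IsetP[_ Hinc]; case: (ord_maxVlift i) => [-> /eqP//|[j ->] _].
by apply: Hinc; rewrite lift_max /=.
Qed.

Lemma Iset0S l : Iset 0 l.+1 = set0.
Proof.
apply/setP => t; rewrite in_set0; apply/negbTE/negP => /IsetP[/(_ ord0)[t_gt0 _] _].
by move: t_gt0; case: (t ord0) => -[].
Qed.

Lemma Iset1S_last l (t : {ffun 'I_l.+1 -> 'I_2}) :
  t \in Iset 1 l.+1 -> t ord_max = ord_max.
Proof.
by move=> /IsetP[/(_ ord_max)[t_gt0 _] _]; apply: val_inj => /=; move: t_gt0;
  case: (t ord_max) => -[|[|]].
Qed.

Definition snoc_top k l (t : {ffun 'I_l -> 'I_k.+1}) : {ffun 'I_l.+1 -> 'I_k.+2} :=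
  [ffun i => if unlift ord_max i is Some j then widen_ord (leqnSn _) (t j)
             else ord_max].

Definition drop_top k l (t : {ffun 'I_l.+1 -> 'I_k.+2}) : {ffun 'I_l -> 'I_k.+1} :=
  [ffun j => inord (t (lift ord_max j))].

Lemma snoc_top_max k l t : @snoc_top k l t ord_max = ord_max.
Proof. by rewrite ffunE unlift_none. Qed.

Lemma snoc_top_lift k l t j :
  @snoc_top k l t (lift ord_max j) = widen_ord (leqnSn _) (t j).
Proof. by rewrite ffunE liftK. Qed.

Lemma snoc_top_in k l t : (@snoc_top k l t \in Iset k.+1 l.+1) = (t \in Iset k l).
Proof.
apply/IsetP/IsetP => [[Ht Hinc]|[Ht Hinc]]; split.
- by move=> i; case: (Ht (lift ord_max i)); rewrite snoc_top_lift ?lift_max /=; lia.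
- move=> i j Hij; have := Hinc (lift ord_max i) (lift ord_max j).
  by rewrite !snoc_top_lift ?lift_max /=; apply; lia.
- move=> i; case: (ord_maxVlift i) => [->|[j ->]].
    by rewrite snoc_top_max /=; lia.
  by rewrite snoc_top_lift ?lift_max /=; case: (Ht j); lia.
- move=> i j; case: (ord_maxVlift i) => [->|[i' ->]].
    by have := ltn_ord j; rewrite /=; lia.
  case: (ord_maxVlift j) => [->|[j' ->]].
    by rewrite snoc_top_lift snoc_top_max => _ /=.
  by rewrite !snoc_top_lift ?lift_max /=; move=> ?; apply: Hinc; lia.
Qed.

Lemma snoc_topK k l : cancel (@snoc_top k l) (@drop_top k l).
Proof.
by move=> t; apply/ffunP => j; rewrite ffunE snoc_top_lift; apply: val_inj;
  rewrite /= inordK.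
Qed.

Lemma drop_topK k l t : t \in Iset k.+1 l.+1 -> t ord_max = ord_max ->
  snoc_top (@drop_top k l t) = t.
Proof.
move=> tI t_max; apply/ffunP => i; case: (ord_maxVlift i) => [->|[j ->]].
  by rewrite snoc_top_max t_max.
rewrite snoc_top_lift ffunE; apply: val_inj => /=; rewrite inordK //.
by have := Iset_last_lt tI (negbT (lift_eqF ord_max j)); rewrite t_max.
Qed.

Definition widen2 k l (t : {ffun 'I_l -> 'I_k.+1}) : {ffun 'I_l -> 'I_k.+3} :=
  [ffun i => widen_ord (leq_trans (leqnSn _) (leqnSn _)) (t i)].

Definition narrow2 k l (t : {ffun 'I_l -> 'I_k.+3}) : {ffun 'I_l -> 'I_k.+1} :=
  [ffun i => inord (t i)].

Lemma widen2_in k l t :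
  (@widen2 k l.+1 t \in Iset k.+2 l.+1) && (widen2 t ord_max != ord_max)
  = (t \in Iset k l.+1).
Proof.
apply/andP/IsetP => [[/IsetP[Ht Hinc] _]|[Ht Hinc]]; first split.
- by move=> i; case: (Ht i); rewrite ffunE /=; lia.
- by move=> i j /Hinc; rewrite !ffunE.
- split; first (apply/IsetP; split).
  + by move=> i; case: (Ht i); rewrite ffunE /=; lia.
  + by move=> i j /Hinc; rewrite !ffunE.
  + rewrite ffunE; apply/eqP => /(congr1 val) /=; have := ltn_ord (t ord_max); lia.
Qed.

Lemma widen2K k l : cancel (@widen2 k l) (@narrow2 k l).
Proof.
by move=> t; apply/ffunP => j; rewrite !ffunE; apply: val_inj; rewrite /= inordK.
Qed.

Lemma narrow2K k l t : t \in Iset k.+2 l.+1 -> t ord_max != ord_max ->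
  widen2 (@narrow2 k l.+1 t) = t.
Proof.
move=> tI t_max; have t_max_le : t ord_max <= k.
  have : val (t ord_max) != k.+2 by apply: contra t_max => /eqP Ht; apply/eqP/val_inj.
  move/IsetP: (tI) => [/(_ ord_max)[_] + _]; have := ltn_ord (t ord_max).
  rewrite /=; lia.
apply/ffunP => i; rewrite !ffunE; apply: val_inj => /=; rewrite inordK //.
have [->|i_max] := eqVneq i ord_max; first by rewrite ltnS.
exact: ltn_trans (leq_trans (Iset_last_lt tI i_max) t_max_le) (ltnSn k).
Qed.

Section Gamma.
Variable a : nat -> int.
Local Open Scope ring_scope.

Lemma sum_Iset_top k l :
  \sum_(t in Iset k.+1 l.+1 | t ord_max == ord_max) \prod_(i < l.+1) a (t i) =
  a k.+1 * gamma a k l.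
Proof.
rewrite (reindex_onto (@snoc_top k l) (@drop_top k l)); last first.
  by move=> t /andP[tI /eqP t_max]; apply: drop_topK.
rewrite /gamma mulr_sumr; apply: eq_big => t.
  by rewrite snoc_top_in snoc_top_max eqxx snoc_topK eqxx !andbT.
move=> _; rewrite big_ord_recr /= snoc_top_max mulrC; congr (_ * _).
apply: eq_bigr => i _.
have -> : widen_ord (leqnSn l) i = lift ord_max i.
  by apply/val_inj; rewrite [RHS]lift_max.
by rewrite snoc_top_lift.
Qed.

Lemma sum_Iset_below_top k l :
  \sum_(t in Iset k.+2 l.+1 | t ord_max != ord_max) \prod_(i < l.+1) a (t i) =
  gamma a k l.+1.
Proof.
rewrite (reindex_onto (@widen2 k l.+1) (@narrow2 k l.+1)); last first.
  by move=> t /andP[]; apply: narrow2K.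
rewrite /gamma; apply: eq_big => t; first by rewrite widen2_in widen2K eqxx andbT.
by move=> _; apply: eq_bigr => i _; rewrite ffunE.
Qed.

Lemma gamma_k0 k : gamma a k 0 = 1.
Proof.
rewrite /gamma (eq_bigl (pred1 [ffun i : 'I_0 => (ord0 : 'I_k.+1)])).
  by rewrite big_pred1_eq big_ord0.
move=> t /=; apply/IsetP/eqP => [_|_]; first by apply/ffunP => -[].
by split=> -[].
Qed.

Lemma gamma_0S l : gamma a 0 l.+1 = 0.
Proof. by rewrite /gamma Iset0S big_set0. Qed.

(* [k.-1] is truncated: for [k = 0] the last term is [gamma a 0 l.+1 = 0]. *)
Lemma gamma_rec k l : gamma a k.+1 l.+1 = a k.+1 * gamma a k l + gamma a k.-1 l.+1.
Proof.
rewrite {1}/gamma (bigID (fun t : {ffun 'I_l.+1 -> 'I_k.+2} => t ord_max == ord_max)) /=.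
rewrite sum_Iset_top.
case: k => [|k]; last by rewrite sum_Iset_below_top.
rewrite gamma_0S big1 // => t /andP[/Iset1S_last ->]; by rewrite eqxx.
Qed.

Lemma gamma_eq0 k l : (k < l)%N -> gamma a k l = 0.
Proof.
elim/ltn_ind: k l => -[|k] IHk [|l] // lt_kl; first exact: gamma_0S.
by rewrite gamma_rec !IHk ?mulr0 ?addr0 //; lia.
Qed.

End Gamma.

Section ReflectX.
Variable R : comNzRingType.
Local Open Scope ring_scope.

Lemma coef_comp_poly_oppX (p : {poly R}) j : (p \Po - 'X)`_j = (-1) ^+ j * p`_j.
Proof.
elim/poly_ind: p j => [|p c IHp] j; first by rewrite comp_poly0 !coef0 mulr0.
rewrite comp_poly_MXaddC mulrN !coefD coefN !coefMX !coefC.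
by case: j => [|j] /=; rewrite ?expr0 ?mul1r ?oppr0 ?add0r ?addr0 // IHp exprS; ring.
Qed.

Lemma comp_poly_oppXK (p : {poly R}) : (p \Po - 'X) \Po - 'X = p.
Proof. by rewrite -comp_polyA raddfN /= comp_polyX opprK comp_polyXr. Qed.

End ReflectX.

Section Continuant.
Variable a : nat -> int.
Local Open Scope ring_scope.

Definition Epoly k : {poly int} := \poly_(j < k.+1) gamma a k j.

Lemma coef_Epoly k j : (Epoly k)`_j = gamma a k j.
Proof. by rewrite coef_poly; case: ltnP => // lt_kj; rewrite gamma_eq0. Qed.

Lemma Epoly0 : Epoly 0 = 1.
Proof. by apply/polyP => -[|j]; rewrite coef_Epoly coefC ?gamma_k0 ?gamma_0S. Qed.

Lemma Epoly_rec k : Epoly k.+1 = Epoly k.-1 + (a k.+1)%:P * 'X * Epoly k.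
Proof.
apply/polyP => -[|j]; rewrite coefD -mulrA coefCM coefXM !coef_Epoly /=.
  by rewrite !gamma_k0 mulr0 addr0.
by rewrite gamma_rec addrC.
Qed.

Lemma Epoly_oppX_rec k :
  Epoly k.+1 \Po - 'X = Epoly k.-1 \Po - 'X - (a k.+1)%:P * 'X * (Epoly k \Po - 'X).
Proof. by rewrite Epoly_rec comp_polyD !comp_polyM comp_polyC comp_polyX; ring. Qed.

(* The Casorati determinant of the recurrence, taken between [X] and [-X]. *)
Lemma Epoly_casorati k :
  Epoly k.+1 * (Epoly k \Po - 'X) + (Epoly k.+1 \Po - 'X) * Epoly k = 2%:P.
Proof.
elim: k => [|k IHk].
  by rewrite Epoly_oppX_rec Epoly_rec /= Epoly0 -polyC1 comp_polyC; ring.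
by rewrite (Epoly_oppX_rec k.+1) (Epoly_rec k.+1) /= -IHk; ring.
Qed.

Lemma coef_Epoly_mix n K p :
  (Epoly n * (Epoly K \Po - 'X))`_p =
  \sum_(0 <= j < (minn p K).+1) (-1) ^+ j * gamma a n (p - j) * gamma a K j.
Proof.
rewrite coefMr -(big_mkord xpredT (fun j => (Epoly n)`_(p - j) * (Epoly K \Po - 'X)`_j)).
rewrite (big_cat_nat _ (n := (minn p K).+1)) //=; last by lia.
rewrite [X in _ + X]big1_seq ?addr0 => [|j]; last first.
  rewrite mem_index_iota => /andP[_ /andP[lt_minj lt_jp]].
  by rewrite coef_comp_poly_oppX (coef_Epoly K) gamma_eq0 ?mulr0 //; lia.
by apply: eq_bigr => j _; rewrite coef_comp_poly_oppX !coef_Epoly; ring.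
Qed.

Lemma coef_Epoly_mix_rec n K p :
  (Epoly n * (Epoly K.+1 \Po - 'X))`_p.+1 =
  (Epoly n * (Epoly K.-1 \Po - 'X))`_p.+1 - a K.+1 * (Epoly n * (Epoly K \Po - 'X))`_p.
Proof.
by rewrite Epoly_oppX_rec mulrBr coefB -!mulrA mulrCA coefCM mulrCA coefXM.
Qed.

Lemma coef_Epoly_mix_odd n p : odd p -> (Epoly n * (Epoly n \Po - 'X))`_p = 0.
Proof.
move=> odd_p; set P := _ * _.
have P_even : P \Po - 'X = P by rewrite comp_polyM comp_poly_oppXK mulrC.
have := coef_comp_poly_oppX P p; rewrite P_even -signr_odd odd_p expr1; lra.
Qed.

Lemma coef_Epoly_mix_even n p :
  ~~ odd p -> (0 < p)%N -> (Epoly n.+1 * (Epoly n \Po - 'X))`_p = 0.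
Proof.
move=> even_p p_gt0; set P := _ * _.
have P_refl : (Epoly n.+1 \Po - 'X) * Epoly n = P \Po - 'X.
  by rewrite comp_polyM comp_poly_oppXK mulrC.
have := congr1 (coefp p) (Epoly_casorati n).
rewrite -/P P_refl /= coefD coefC gtn_eqF //.
rewrite coef_comp_poly_oppX -signr_odd (negbTE even_p) expr0 mul1r; lra.
Qed.

Lemma coef_Epoly_mix_eq0 n K p : ~~ odd n -> (n - p < K <= n)%N -> odd (K + p) ->
  (Epoly n * (Epoly K \Po - 'X))`_p = 0.
Proof.
move=> even_n; elim: p K => [|p IHp] K; first by lia.
have [d] := ubnP (n - K); elim: d K => // d IHd K lt_nK_d rangeK odd_Kp.
case: (ltngtP K.+1 n) => [lt_K1n|lt_nK1|eq_K1n].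
- have odd_K1p : odd (K.+1 + p) by rewrite addSnnS.
  have odd_K2p : odd (K.+2 + p.+1) by rewrite !addSn /= negbK.
  have zero_K2 : (Epoly n * (Epoly K.+2 \Po - 'X))`_p.+1 = 0.
    by apply: (IHd _ _ _ odd_K2p); lia.
  have zero_K1 : (Epoly n * (Epoly K.+1 \Po - 'X))`_p = 0.
    by apply: (IHp _ _ odd_K1p); lia.
  by have := coef_Epoly_mix_rec n K.+1 p; rewrite /= zero_K2 zero_K1 mulr0 subr0 => <-.
- have eq_Kn : K = n by lia.
  rewrite eq_Kn coef_Epoly_mix_odd //.
  by move: odd_Kp; rewrite eq_Kn oddD (negbTE even_n).
- rewrite -eq_K1n coef_Epoly_mix_even //.
  by move: even_n odd_Kp; rewrite -eq_K1n oddD /=; case: (odd K).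
Qed.

End Continuant.

Theorem lemma3 (n : nat) (a : nat -> int) (m l r0 : nat) :
  (0 < n)%N -> ~~ odd n ->
  (forall t, (1 <= t <= n)%N -> (0 < a t)%R) ->
  (1 <= m <= n)%N -> m = (2 * l + r0)%N -> (r0 <= 1)%N ->
  gamma a n m =
  (\sum_(r0 <= i < ((n - m + r0) %/ 2).+1)
     a (2 * i + 1 - r0)%N * Gamma a n m r0 i)%R.
Proof.
move=> _ even_n _ /andP[m_gt0 le_mn] m_def r0_le1.
have n_mod2 : (n %% 2 = 0)%N by rewrite modn2 (negbTE even_n).
pose f i := ((Epoly a n * (Epoly a (2 * i - r0).-1 \Po - 'X))`_m)%R.
have f_step i : (r0 <= i)%N ->
    (f i - f i.+1 = a (2 * i + 1 - r0)%N * Gamma a n m r0 i)%R.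
  move=> le_r0i; rewrite /f /Gamma subn1 -coef_Epoly_mix -{1 2}(prednK m_gt0).
  have -> : (2 * i.+1 - r0).-1 = (2 * i - r0).+1 by lia.
  rewrite coef_Epoly_mix_rec (_ : (2 * i + 1 - r0 = (2 * i - r0).+1)%N); last by lia.
  by rewrite opprB addrC subrK.
have f_first : f r0 = gamma a n m.
  rewrite /f (_ : (2 * r0 - r0).-1 = 0)%N; last by lia.
  by rewrite Epoly0 -polyC1 comp_polyC polyC1 mulr1 coef_Epoly.
have f_last : f ((n - m + r0) %/ 2).+1 = 0%R.
  apply: coef_Epoly_mix_eq0 => //; first by lia.
  have : (((2 * ((n - m + r0) %/ 2).+1 - r0).-1 + m) %% 2 = 1)%N by lia.
  by rewrite modn2; case: odd.
rewrite (eq_big_nat _ _ (F2 := fun i => - f i.+1 - - f i)%R); last first.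
  by move=> i /andP[le_r0i _]; rewrite -f_step // opprK addrC.
by rewrite telescope_sumr ?f_last ?f_first ?oppr0 ?opprK ?add0r //; lia.
Qed.
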